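(* Let $\mathbf x,\mathbf m\in\mathbb C^d$ with $\operatorname{supp}(\widehat{\mathbf x})\subseteq[\gamma]_0$ and $\operatorname{supp}(\mathbf m)\subseteq[\delta]_0$, let $N\in\mathbb R^{d\times d}$, and let $K,L$ divide $d$. Let $\widetilde Y=F_LY_{K,L}^TF_K^T$ and $\widetilde N=F_LN_{K,L}^TF_K^T$. Suppose $K=\delta-1+\kappa$ for some integer $2\le\kappa\le\delta$ and $L=\gamma-1+\xi$ for some integer $1\le\xi\le\gamma$. Then for $\alpha\in[L]_0$ and $\omega\in[K]_0$: (i) if $0\le\alpha\le\xi-1$ and $0\le\omega\le\kappa-1$, then $\widetilde Y_{\alpha,\omega}=\frac{KL}{d^3}\left(F_d(\widehat{\mathbf x}\circ S_{-\alpha}\overline{\widehat{\mathbf x}})\right)_\omega\left(F_d(\widehat{\mathbf m}\circ S_\alpha\overline{\widehat{\mathbf m}})\right)_\omega+\widetilde N_{\alpha,\omega}$; (ii) if $0\le\alpha\le\xi-1$ and $\delta\le\omega\le K-1$, then $\widetilde Y_{\alpha,\omega}=\frac{KL}{d^3}\left(F_d(\widehat{\mathbf x}\circ S_{-\alpha}\overline{\widehat{\mathbf x}})\right)_{\omega-K}\left(F_d(\widehat{\mathbf m}\circ S_\alpha\overline{\widehat{\mathbf m}})\right)_{\omega-K}+\widetilde N_{\alpha,\omega}$; (iii) if $\gamma\le\alpha\le L-1$ and $0\le\omega\le\kappa-1$, then $\widetilde Y_{\alpha,\omega}=\frac{KL}{d^3}\left(F_d(\widehat{\mathbf x}\circ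 S_{L-\alpha}\overline{\widehat{\mathbf x}})\right)_\omega\left(F_d(\widehat{\mathbf m}\circ S_{\alpha-L}\overline{\widehat{\mathbf m}})\right)_\omega+\widetilde N_{\alpha,\omega}$; (iv) if $\gamma\le\alpha\le L-1$ and $\delta\le\omega\le K-1$, then $\widetilde Y_{\alpha,\omega}=\frac{KL}{d^3}\left(F_d(\widehat{\mathbf x}\circ S_{L-\alpha}\overline{\widehat{\mathbf x}})\right)_{\omega-K}\left(F_d(\widehat{\mathbf m}\circ S_{\alpha-L}\overline{\widehat{\mathbf m}})\right)_{\omega-K}+\widetilde N_{\alpha,\omega}$.
   Context: Vectors in $\mathbb C^d$ are indexed by $[d]_0=\{0,1,\dots,d-1\}$, with all indices interpreted modulo $d$. $F_n$ denotes the $n\times n$ DFT matrix $(F_n)_{j,k}=e^{-2\pi i jk/n}$, and $\widehat{\mathbf x}=F_d\mathbf x$. The shift is $(S_\ell\mathbf x)_n=x_{n+\ell}$; $\circ$ is the entrywise product and $\overline{\mathbf x}$ the entrywise conjugate; $\operatorname{supp}(\mathbf x)=\{n:x_n\neq0\}$. Measurements: given $\mathbf x,\mathbf m\in\mathbb C^d$ and an arbitrary real noise matrix $N\in\mathbb R^{d\times d}$, $Y\in\mathbb R^{d\times d}$ has entries $Y_{k,\ell}=\left|\sum_{n=0}^{d-1}x_nm_{n-\ell}e^{-2\pi i nk/d}\right|^2+N_{k,\ell}$ for $k,\ell\in[d]_0$. For positive integers $K,L$ dividing $d$, $Y_{K,L}$ is the $K\times L$ matrix $(Y_{K,L})_{k,\ell}=Y_{kd/K,\ell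 d/L}$ and $N_{K,L}$ is defined analogously from $N$. $\widetilde Y$ has rows indexed by $[L]_0$ and columns by $[K]_0$. *)

From HB Require Import structures.
From mathcomp Require Import all_boot all_order all_algebra all_field.
Set Implicit Arguments. Unset Strict Implicit. Unset Printing Implicit Defensive.
Import Order.TTheory GRing.Theory Num.Theory.
Local Open Scope ring_scope.

(* e^{2 pi i / n}: n.-root (-1) is e^{i pi / n} (root of minimal argument). *)
Definition zeta (n : nat) : algC := (n.-root (-1)) ^+ 2.
Definition wroot (n : nat) : algC := (zeta n)^-1.

Definition Fmat (n : nat) : 'M[algC]_n := \matrix_(j < n, k < n) wroot n ^+ (j * k).

(* Vectors in C^d are functions 'I_d -> algC; indices are read modulo d. *)
Definition vat (d : nat) (x : 'I_d -> algC) (n : int) : algC :=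
  if @insub nat (fun i => i < d)%N _ (absz (n %% d%:Z)%Z) is Some i then x i else 0.

Definition mat_at (d : nat) (A : 'M[algC]_d) (i j : int) : algC :=
  vat (fun i' => vat (fun j' => A i' j') j) i.

Definition dftv (d : nat) (x : 'I_d -> algC) : 'I_d -> algC :=
  fun k => \sum_(j < d) Fmat d k j * x j.

Definition shiftv (d : nat) (l : int) (x : 'I_d -> algC) : 'I_d -> algC :=
  fun n => vat x (n%:Z + l).

Definition conjv (d : nat) (x : 'I_d -> algC) : 'I_d -> algC := fun n => (x n)^*.

Definition hadamard (d : nat) (x y : 'I_d -> algC) : 'I_d -> algC :=
  fun n => x n * y n.

Definition supp_in (d : nat) (x : 'I_d -> algC) (g : nat) : Prop :=
  forall n : 'I_d, (g <= n)%N -> x n = 0.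

Definition Ymat (d : nat) (x m : 'I_d -> algC) (N : 'M[algC]_d) : 'M[algC]_d :=
  \matrix_(k < d, l < d)
    (`| \sum_(n < d) x n * vat m (n%:Z - l%:Z) * wroot d ^+ (n * k) | ^+ 2 + N k l).

Definition subsample (d K L : nat) (A : 'M[algC]_d) : 'M[algC]_(K, L) :=
  \matrix_(k < K, l < L) mat_at A (k * (d %/ K))%N (l * (d %/ L))%N.

Definition tildemx (d K L : nat) (A : 'M[algC]_d) : 'M[algC]_(L, K) :=
  Fmat L *m (subsample K L A)^T *m (Fmat K)^T.

(* Defs fixes w_n = (n.-root (-1))^-2, and algC only tells
      us that n.-root (-1) has maximal real part among the n-th roots of -1 in
      the closed upper half-plane.  We show that this root is the "half-turn
      root" e^{i pi/n}, characterised algebraically by u^n = -1 and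
      Im (u^j) > 0 for 0 < j < n, using elementary plane geometry (proved over
      an arbitrary real domain and transported to algC through algR).  Hence
      w_n is a primitive n-th root of unity and w_(n e)^e = w_n.
   2. Discrete Fourier analysis on Z/dZ: periodicity of e, the geometric-sum
      orthogonality relation, the inverse DFT, and the expansion of the
      spectrogram |S_{k,l}|^2 as a double sum over pairs (p, j), (p', j') of
      x^_p m_j conj(x^_p' m_j') e(...).
   3. Summing over the subsampled grid turns the phases into the indicators
      [K | w + j - j'] and [L | a - p + p'].  Since the supports of x^ and m
      are short and K = delta - 1 + kappa, L = gamma - 1 + xi, the relevant
      differences lie in a window of width < 2K (resp. 2L), where the
      indicator pins down a single shift; this gives the product formula. *)

From Pilot Require Import Defs.
From HB Require Import structures.
From mathcomp Require Import all_boot all_order all_algebra all_field.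
From mathcomp Require Import ring lra zify.
Import Order.TTheory GRing.Theory Num.Theory.
Set Implicit Arguments. Unset Strict Implicit. Unset Printing Implicit Defensive.
Local Open Scope ring_scope.

(* Planar inequalities over a real domain.  (p, q) and (c, s) are points,
   (p c - q s, p s + q c) their complex product. *)
Section PlanarInequalities.
Variable R : realDomainType.

(* Multiplying a point of the upper half-plane by a unit vector of the open
   upper half-plane, without leaving the upper half-plane, lowers its abscissa. *)
Lemma rotation_decreases_abscissa (p q c s : R) :
  c ^+ 2 + s ^+ 2 = 1 -> 0 < q -> 0 < s -> 0 < p * s + q * c -> p * c - q * s < p.
Proof.
move=> cs1 q_gt0 s_gt0 im_gt0.
have c_lt1 : c < 1 by nra.
have : 0 < (p * s + q * c) * (1 - c) by nra.
have : 0 < q * (1 - c) by nra.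
nra.
Qed.

(* A unit vector (c, s) of the open upper half-plane lying strictly
   counterclockwise of the unit vector (p, q), q >= 0, has a smaller abscissa. *)
Lemma counterclockwise_abscissa (p q c s : R) :
  p ^+ 2 + q ^+ 2 = 1 -> c ^+ 2 + s ^+ 2 = 1 -> 0 <= q -> 0 < s ->
  q * c - p * s < 0 -> c < p.
Proof.
move=> pq1 cs1 q_ge0 s_gt0 cross_lt0; rewrite ltNge; apply/negP => p_le_c.
have [p_ge0|p_lt0] := lerP 0 p.
  have : s ^+ 2 <= q ^+ 2 by nra.
  have : s <= q by nra.
  nra.
have [c_ge0|c_lt0] := lerP 0 c.
  have : 0 <= q * c by apply: mulr_ge0.
  have : 0 < - p * s by apply: mulr_gt0; lra.
  nra.
have : q ^+ 2 <= s ^+ 2 by nra.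
have : q <= s by nra.
nra.
Qed.

Lemma unit_abscissa_ge (c s : R) : c ^+ 2 + s ^+ 2 = 1 -> -1 <= c.
Proof. by move=> cs1; nra. Qed.

End PlanarInequalities.

Lemma unit_ReIm (z : algC) : `|z| = 1 -> 'Re z ^+ 2 + 'Im z ^+ 2 = 1.
Proof. by rewrite -normC2_Re_Im => ->; rewrite expr1n. Qed.

Notation realR z := (in_algR (Creal_Re z)).
Notation imagR z := (in_algR (Creal_Im z)).

Lemma unit_ReIm_algR (z : algC) : `|z| = 1 -> realR z ^+ 2 + imagR z ^+ 2 = 1.
Proof.
move=> /unit_ReIm z1; apply: val_inj.
by rewrite (rmorphD algRval) !(rmorphXn algRval) (rmorph1 algRval).
Qed.

Lemma Re_mul_unit_lt (a u : algC) : `|u| = 1 -> 0 < 'Im u -> 0 < 'Im a ->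
  0 < 'Im (a * u) -> 'Re (a * u) < 'Re a.
Proof.
move=> /unit_ReIm_algR u1 Iu Ia; rewrite ReM ImM (mulrC ('Re u)) => Iau.
exact: (rotation_decreases_abscissa (p := realR a) (q := imagR a) u1).
Qed.

Lemma Re_lt_of_cross (x g : algC) : `|x| = 1 -> `|g| = 1 -> 0 <= 'Im x -> 0 < 'Im g ->
  'Im (x * g^*) < 0 -> 'Re g < 'Re x.
Proof.
move=> /unit_ReIm_algR x1 /unit_ReIm_algR g1 Ix Ig.
rewrite ImM Re_conj Im_conj mulrN (mulrC ('Re g)) addrC => cross.
exact: (counterclockwise_abscissa x1 g1).
Qed.

Lemma Re_unit_ge (z : algC) : `|z| = 1 -> -1 <= 'Re z.
Proof. by move=> /unit_ReIm_algR /unit_abscissa_ge. Qed.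

Lemma Re1 : 'Re (1 : algC) = 1. Proof. by apply/Creal_ReP; rewrite rpred1. Qed.
Lemma Im1 : 'Im (1 : algC) = 0. Proof. by apply/Creal_ImP; rewrite rpred1. Qed.
Lemma ReN (z : algC) : 'Re (- z) = - 'Re z. Proof. by rewrite raddfN. Qed.
Lemma ImN (z : algC) : 'Im (- z) = - 'Im z. Proof. by rewrite raddfN. Qed.

Lemma norm_eq1_of_expr (z : algC) n : (0 < n)%N -> `|z ^+ n| = 1 -> `|z| = 1.
Proof.
by move=> n_gt0 /eqP; rewrite normrX (pexpr_eq1 n_gt0 (normr_ge0 z)) => /eqP.
Qed.

Lemma unity_root_norm (z : algC) n : (0 < n)%N -> z ^+ n = 1 -> `|z| = 1.
Proof. by move=> n_gt0 zn; apply: (norm_eq1_of_expr n_gt0); rewrite zn normr1. Qed.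

Lemma mul_conj_unit (z : algC) : `|z| = 1 -> z * z^* = 1.
Proof. by rewrite -normCK => ->; rewrite expr1n. Qed.

Lemma real_unit (z : algC) : `|z| = 1 -> 'Im z = 0 -> z = 1 \/ z = -1.
Proof.
move=> z1 Iz0; have Rz : z \is Num.real by apply/Creal_ImP.
have := unit_ReIm z1; rewrite Iz0 expr0n addr0 (Creal_ReP _ Rz) => /eqP.
by rewrite sqrf_eq1 => /orP[/eqP->|/eqP->]; [left|right].
Qed.

Lemma m1_neq1 : (-1 : algC) != 1.
Proof. by rewrite -subr_eq0 -opprD oppr_eq0 -(natrD _ 1 1) pnatr_eq0. Qed.

(* u is e^{i pi/n}: it is an n-th root of -1 whose powers u, ..., u^(n-1)
   all lie in the open upper half-plane. *)
Definition half_turn_root (n : nat) (u : algC) : Prop :=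
  u ^+ n = -1 /\ forall j, (0 < j < n)%N -> 0 < 'Im (u ^+ j).

Section HalfTurnRoot.
Variables (n : nat) (u : algC).
Hypotheses (n_gt0 : (0 < n)%N) (u_half : half_turn_root n u).

Lemma half_turn_norm : `|u| = 1.
Proof. by apply: (norm_eq1_of_expr n_gt0); rewrite (proj1 u_half) normrN1. Qed.

(* The powers u^m, 0 < m < n, turn counterclockwise, so their abscissae
   decrease. *)
Lemma half_turn_Re_powers m : (0 < m < n)%N -> 'Re (u ^+ m) <= 'Re u.
Proof.
have [un Iu] := u_half; elim: m => [//|[|m] IHm] /andP[_ lt_m_n].
  by rewrite expr1.
apply: le_trans (IHm _); last by lia.
rewrite exprSr; apply/ltW/Re_mul_unit_lt; first exact: half_turn_norm.
- by have := Iu 1%N; rewrite expr1; apply; lia.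
- by apply: Iu; lia.
- by rewrite -exprSr; apply: Iu; lia.
Qed.

Lemma half_turn_primitive : (2 * n)%N.-primitive_root u.
Proof.
have [un Iu] := u_half.
have u2n : u ^+ (2 * n) = 1 by rewrite mulnC exprM un sqrrN expr1n.
have n2_gt0 : (0 < 2 * n)%N by lia.
have [m u_m m_dvd] := prim_order_exists n2_gt0 u2n.
suff -> : (2 * n)%N = m by [].
have um := prim_expr_order u_m; have m_gt0 := prim_order_gt0 u_m.
have m_le : (m <= 2 * n)%N by apply: dvdn_leq; lia.
apply/eqP; rewrite eqn_leq m_le andbT leqNgt; apply/negP => m_lt.
have [lt_m_n|le_n_m] := ltnP m n.
  by have := Iu m; rewrite m_gt0 lt_m_n um Im1 ltxx => /(_ isT).
have um_n : u ^+ m = - u ^+ (m - n) by rewrite -(subnK le_n_m) exprD un mulrN1 addnK.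
have [m_n|lt_n_m] := eqVneq m n.
  by move: um; rewrite m_n un => /eqP; rewrite (negbTE m1_neq1).
have u_mn : u ^+ (m - n) = -1 by rewrite -[u ^+ (m - n)]opprK -um_n um.
have : (0 < m - n < n)%N by lia.
by move/Iu; rewrite u_mn ImN Im1 oppr0 ltxx.
Qed.

Lemma half_turn_rootC : u = n.-root (-1).
Proof.
have [un Iu] := u_half.
case: (ltnP 1 n) => [n_gt1|n_le1]; last first.
  have n1 : n = 1%N by lia.
  by move: un; rewrite n1 root1C expr1.
set r := n.-root (-1).
have rn : r ^+ n = -1 by rewrite rootCK.
have Ir : 0 <= 'Im r by apply: Im_rootC_ge0.
have r1 : `|r| = 1 by apply: (norm_eq1_of_expr n_gt0); rewrite rn normrN1.
have Iu1 : 0 < 'Im u by have := Iu 1%N; rewrite expr1; apply; lia.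
have r2n : r ^+ (2 * n) = 1 by rewrite mulnC exprM rn sqrrN expr1n.
have [[i lt_i] ri] := prim_rootP half_turn_primitive r2n; rewrite /= in ri.
have Re_le : 'Re u <= 'Re r by apply: rootC_Re_max => //; exact: ltW.
have Re_ge : 'Re r <= 'Re u.
  have [lt_i_n|lt_n_i|i_n] := ltngtP i n.
  - case: i lt_i ri lt_i_n => [|i] _ ri lt_i_n.
      by move: rn; rewrite ri expr0 expr1n => /eqP; rewrite eq_sym (negbTE m1_neq1).
    by rewrite ri; apply: half_turn_Re_powers; lia.
  - have ui : u ^+ i = - u ^+ (i - n).
      by rewrite -{1}(subnK (ltnW lt_n_i)) exprD un mulrN1.
    have Iu_in : 0 < 'Im (u ^+ (i - n)) by apply: Iu; lia.
    by move: Ir; rewrite ri ui ImN oppr_ge0 => /(lt_le_trans Iu_in); rewrite ltxx.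
  - by rewrite ri i_n un ReN Re1; apply: Re_unit_ge half_turn_norm.
apply: eqC_semipolar; first by rewrite half_turn_norm r1.
  by apply/eqP; rewrite eq_le Re_le Re_ge.
by apply: mulr_ge0 => //; exact: ltW.
Qed.

End HalfTurnRoot.

Section HalfTurnRootExists.
Variables (n : nat) (h g : algC).
Hypothesis n_gt1 : (1 < n)%N.
Hypotheses (h_root : h ^+ (2 * n) = 1) (h_upper : 0 < 'Im h).
Hypothesis h_order : forall j, (0 < j < n)%N -> h ^+ (2 * j) != 1.
Hypotheses (g_root : g ^+ (2 * n) = 1) (g_upper : 0 < 'Im g).
Hypothesis g_max : forall y, y ^+ (2 * n) = 1 -> 0 < 'Im y -> 'Re y <= 'Re g.

Let n2_gt0 : (0 < 2 * n)%N. Proof. by rewrite muln_gt0 (ltnW n_gt1). Qed.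
Let unit_root (y : algC) : y ^+ (2 * n) = 1 -> `|y| = 1.
Proof. exact: unity_root_norm n2_gt0. Qed.
Let g_norm : `|g| = 1. Proof. exact: unit_root. Qed.

(* Rotating an upper 2n-th root clockwise by g never crosses into the
   lower half-plane, by maximality of g. *)
Lemma rotate_back (y : algC) : y ^+ (2 * n) = 1 -> 0 < 'Im y -> 0 <= 'Im (y * g^*).
Proof.
move=> y1 Iy; rewrite real_leNgt ?Creal_Im ?rpred0 //; apply/negP => cross.
have := g_max y1 Iy.
by rewrite real_leNgt ?Creal_Re // (Re_lt_of_cross (unit_root y1) g_norm (ltW Iy) g_upper cross).
Qed.

Lemma leave_upper_half_plane j :
  0 < 'Im (g ^+ j.+1) -> 'Im (g ^+ j.+2) <= 0 -> g ^+ j.+2 = -1.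
Proof.
move=> I1 I2; set y := - g ^+ j.+2.
have y1 : y ^+ (2 * n) = 1.
  have m1 : (-1 : algC) ^+ (2 * n) = 1 by rewrite exprM sqrrN !expr1n.
  by rewrite exprNn m1 mul1r -exprM mulnC exprM g_root expr1n.
have Iy : 0 <= 'Im y by rewrite ImN oppr_ge0.
have yg : y * g^* = - g ^+ j.+1.
  by rewrite /y mulNr exprSr -mulrA mul_conj_unit // mulr1.
have Re_lt : 'Re g < 'Re y.
  by apply: Re_lt_of_cross => //; [exact: unit_root | rewrite yg ImN oppr_lt0].
have Iy0 : 'Im y = 0.
  apply/eqP; rewrite eq_le Iy andbT real_leNgt ?Creal_Im ?rpred0 //.
  by apply/negP => /(g_max y1); rewrite real_leNgt ?Creal_Re // Re_lt.
have [y_1|y_m1] := real_unit (unit_root y1) Iy0.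
  by rewrite -[g ^+ _]opprK -/y y_1.
move: Re_lt; rewrite y_m1 ReN Re1 real_ltNge ?Creal_Re ?rpredN1 //.
by rewrite (Re_unit_ge g_norm).
Qed.

(* g^j = -1 with j < n is impossible: rotating h back by g, j times, would
   stay in the upper half-plane by rotate_back and end at -h. *)
Lemma no_early_half_turn j : (0 < j < n)%N -> g ^+ j != -1.
Proof.
move=> j_bd; apply/eqP => gj.
have gj2 : (g ^+ j) ^+ 2 = 1 by rewrite gj sqrrN expr1n.
suff upper k : (k <= j)%N -> 0 < 'Im (h * (g^*) ^+ k).
  move: (upper j (leqnn j)).
  by rewrite -rmorphXn gj rmorphN rmorph1 mulrN1 ImN oppr_gt0 real_ltNge ?Creal_Im ?rpred0 // (ltW h_upper).
elim: k => [|k IHk] le_k_j; first by rewrite expr0 mulr1.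
set y := h * (g^*) ^+ k; have Iy := IHk (ltnW le_k_j).
have y1 : y ^+ (2 * n) = 1.
  by rewrite exprMn h_root mul1r -exprM mulnC exprM -rmorphXn g_root rmorph1 expr1n.
rewrite exprSr mulrA -/y lt_def rotate_back // andbT.
apply/eqP => Iyg.
have gk : (g^*) ^+ k.+1 * g ^+ k.+1 = 1.
  by rewrite -exprMn mulrC mul_conj_unit // expr1n.
have hg : h = (y * g^*) * g ^+ k.+1.
  by rewrite /y -(mulrA h) -exprSr -mulrA gk mulr1.
have yg2 : (y * g^*) ^+ 2 = 1.
  have yg1 : `|y * g^*| = 1 by rewrite normrM norm_conjC g_norm mulr1 unit_root.
  by have [->|->] := real_unit yg1 Iyg; rewrite ?sqrrN expr1n.
have := h_order j_bd; rewrite hg exprMn exprM yg2 expr1n mul1r.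
by rewrite -exprM mulnC exprM mulnC exprM gj2 expr1n eqxx.
Qed.

Lemma powers_upper j : (0 < j < n)%N -> 0 < 'Im (g ^+ j).
Proof.
elim: j => [//|[|j] IHj] /andP[_ lt_j_n]; first by rewrite expr1.
have I1 : 0 < 'Im (g ^+ j.+1) by apply: IHj; lia.
rewrite real_ltNge ?Creal_Im ?rpred0 //; apply/negP => I2.
have : (0 < j.+2 < n)%N by lia.
by move/no_early_half_turn; rewrite (leave_upper_half_plane I1 I2) eqxx.
Qed.

Lemma max_root_half_turn : half_turn_root n g.
Proof.
split; last exact: powers_upper.
have [m n_eq] : exists m, n = m.+2 by exists n.-2; lia.
have I1 : 0 < 'Im (g ^+ m.+1) by apply: powers_upper; lia.
rewrite n_eq; apply: leave_upper_half_plane => //.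
have : (g ^+ n) ^+ 2 = 1 by rewrite -exprM mulnC g_root.
move/eqP; rewrite sqrf_eq1 -n_eq => /orP[] /eqP->; by rewrite ?ImN Im1 ?oppr0.
Qed.

End HalfTurnRootExists.

Lemma half_turn_root_exists n : (0 < n)%N -> exists u, half_turn_root n u.
Proof.
move=> n_gt0; have [n_le1|n_gt1] := leqP n 1.
  have -> : n = 1%N by lia.
  by exists (-1); split => [|j]; [rewrite expr1 | lia].
have [z z_prim] : {z : algC | (2 * n)%N.-primitive_root z}.
  by apply: C_prim_root_exists; lia.
have z2n := prim_expr_order z_prim.
have z_order j : (0 < j < n)%N -> z ^+ (2 * j) != 1.
  by move=> j_bd; rewrite -(prim_order_dvd z_prim); apply/negP => /dvdn_leq; lia.
have Iz : 'Im z != 0.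
  apply/eqP => /(real_unit (unity_root_norm (prim_order_gt0 z_prim) z2n)) z_sign.
  have /z_order : (0 < 1 < n)%N by lia.
  by case: z_sign => ->; rewrite ?sqrrN expr1n eqxx.
pose h := if 0 < 'Im z then z else z^*.
have h2n : h ^+ (2 * n) = 1 by rewrite /h; case: ifP; rewrite -?rmorphXn z2n ?rmorph1.
have Ih : 0 < 'Im h.
  move: Iz; rewrite real_neqr_lt ?Creal_Im ?rpred0 // /h.
  by case/orP => Iz; [rewrite (lt_gtF Iz) Im_conj oppr_gt0 | rewrite Iz].
have h_order j : (0 < j < n)%N -> h ^+ (2 * j) != 1.
  by move=> /z_order; rewrite /h; case: ifP; rewrite -?rmorphXn ?fmorph_eq1.
have [i0 h_i0] := prim_rootP z_prim h2n.
pose P (i : 'I_(2 * n)) : bool := 0 < 'Im (z ^+ i).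
have P_i0 : P i0 by rewrite /P -h_i0.
case: (arg_maxP (fun i : 'I_(2 * n) => realR (z ^+ i)) P_i0) => i P_i i_max.
exists (z ^+ i); apply: (max_root_half_turn n_gt1 h2n Ih h_order) => //.
  by rewrite -exprM mulnC exprM z2n expr1n.
by move=> y /(prim_rootP z_prim) [j ->] Iy; apply: (i_max j).
Qed.

Lemma rootC_half_turn n : (0 < n)%N -> half_turn_root n (n.-root (-1 : algC)).
Proof.
move=> n_gt0; have [u u_half] := half_turn_root_exists n_gt0.
by rewrite -(half_turn_rootC n_gt0 u_half).
Qed.

(* Hence (n e).-root(-1)^e = n.-root(-1), as both are half-turn roots. *)
Lemma rootC_expr n e : (0 < n)%N -> (0 < e)%N ->
  (n * e).-root (-1 : algC) ^+ e = n.-root (-1).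
Proof.
move=> n_gt0 e_gt0; have ne_gt0 : (0 < n * e)%N by rewrite muln_gt0 n_gt0.
have [r_ne Ir] := rootC_half_turn ne_gt0.
apply: half_turn_rootC => //; split; first by rewrite -exprM (mulnC e n) r_ne.
move=> j j_bd; rewrite -exprM; apply: Ir.
by rewrite muln_gt0 e_gt0 (mulnC e j) ltn_pmul2r //; case/andP: j_bd => -> ->.
Qed.

Lemma zeta_primitive n : (0 < n)%N -> n.-primitive_root (zeta n).
Proof.
move=> n_gt0; have := half_turn_primitive n_gt0 (rootC_half_turn n_gt0).
by move/dvdn_prim_root => /(_ n (dvdn_mull 2 (dvdnn n))); rewrite mulnK.
Qed.

Lemma wroot_expr n e : (0 < n)%N -> (0 < e)%N -> wroot (n * e) ^+ e = wroot n.
Proof.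
by move=> n_gt0 e_gt0; rewrite /wroot /zeta exprVn -exprM (mulnC 2 e) exprM rootC_expr.
Qed.

Lemma wroot_neq0 n : (0 < n)%N -> wroot n != 0.
Proof.
by move=> n_gt0; rewrite /wroot invr_eq0 (prim_root_eq0 (zeta_primitive n_gt0)) eqn0Ngt n_gt0.
Qed.

Lemma wroot_eq1 n i : (0 < n)%N -> (wroot n ^+ i == 1) = (n %| i)%N.
Proof.
by move=> n_gt0; rewrite /wroot exprVn invr_eq1 (prim_order_dvd (zeta_primitive n_gt0)).
Qed.

Lemma wroot_div n L : (0 < n)%N -> (L %| n)%N -> wroot n ^+ (n %/ L) = wroot L.
Proof.
move=> n_gt0 L_dvd; have L_gt0 : (0 < L)%N by apply: dvdn_gt0 L_dvd.
have e_gt0 : (0 < n %/ L)%N by rewrite divn_gt0 // dvdn_leq.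
by rewrite -(wroot_expr L_gt0 e_gt0) mulnC divnK.
Qed.

(* In a window of width < 2n around a multiple c of n, only c is divisible
   by n: this is what rules out aliasing. *)
Lemma dvdz_window (n : nat) (a c : int) : (0 < n)%N -> (n%:Z %| c)%Z ->
  c - n%:Z < a -> a < c + n%:Z -> (n%:Z %| a)%Z = (a == c).
Proof.
move=> n_gt0 /dvdzP [q ->] lo hi; apply/idP/eqP => [/dvdzP [r a_eq]|->]; last first.
  by rewrite dvdz_mull.
rewrite a_eq in lo hi *.
have n_pos : 0 < n%:Z by rewrite ltz_nat.
have r_lt : r < q + 1 by rewrite -(ltr_pM2r n_pos) mulrDl mul1r.
have q_lt : q < r + 1 by rewrite -(ltr_pM2r n_pos) mulrDl mul1r -ltrBlDr.
by have -> : r = q by lia.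
Qed.

Section DiscreteFourier.
Variable d' : nat.
Local Notation d := d'.+1.

Definition phase (a : int) : algC := wroot d ^ a.

Lemma phaseD a b : phase (a + b) = phase a * phase b.
Proof. exact/expfzDr/wroot_neq0. Qed.

Lemma phase_nat (n : nat) : phase n%:Z = wroot d ^+ n.
Proof. by []. Qed.

Lemma phaseMn (a : int) (k : nat) : phase (a * k%:Z) = phase a ^+ k.
Proof. by rewrite /phase -exprz_exp. Qed.

Lemma phase_dvd a : (d%:Z %| a)%Z -> phase a = 1.
Proof.
case/dvdzP => q ->; rewrite /phase mulrC -exprz_exp.
have /eqP -> : wroot d ^ d%:Z == 1 by rewrite wroot_eq1.
exact: exp1rz.
Qed.

Lemma phase_per a b : (d%:Z %| a - b)%Z -> phase a = phase b.
Proof. by move=> ab; rewrite -(subrK b a) phaseD phase_dvd ?mul1r. Qed.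

Lemma phase_eq1 a : (phase a == 1) = (d%:Z %| a)%Z.
Proof.
have -> : phase a = phase (a %% d)%Z by apply: phase_per; rewrite -eqz_mod_dvd modz_mod.
have : (0 <= a %% d)%Z by apply: modz_ge0.
case E : (a %% d)%Z => [k|//] _.
have lt_k_d : (k < d)%N by have := ltz_pmod a (ltz_nat 0 d); rewrite E.
rewrite phase_nat wroot_eq1 //; apply/idP/idP => [k_dvd|/dvdz_mod0P]; last first.
  by rewrite E => -[->].
have k0 : k = 0%N by move: k_dvd lt_k_d; case: (k) => // k' /dvdn_leq; lia.
by apply/dvdz_mod0P; rewrite E k0.
Qed.

Lemma phase_conj a : (phase a)^* = phase (- a).
Proof.
have w1 : `|wroot d| = 1 by apply: (unity_root_norm (ltn0Sn d')); apply/eqP; rewrite wroot_eq1.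
have wc : (wroot d)^* = (wroot d)^-1.
  by apply: (mulfI (wroot_neq0 (ltn0Sn d'))); rewrite mul_conj_unit // mulfV // wroot_neq0.
by rewrite /phase (fmorphXz (@Num.conj algC)) -exprz_inv; congr (_ ^ _).
Qed.

Lemma phase_orthogonality (K : nat) (a : int) : (0 < K)%N -> (K %| d)%N ->
  \sum_(k < K) phase ((d %/ K * k)%N%:Z * a) = K%:R * ((K%:Z %| a)%Z)%:R.
Proof.
move=> K_gt0 K_dvd; set e := (d %/ K)%N.
have d_eq : d = (e * K)%N by rewrite /e divnK.
set rho := phase (e%:Z * a).
have phase_k (k : 'I_K) : phase ((e * k)%N%:Z * a) = rho ^+ k.
  by rewrite -phaseMn; congr phase; rewrite PoszM; ring.
rewrite (eq_bigr _ (fun k _ => phase_k k)).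
have rho_K : rho ^+ K = 1.
  by rewrite /rho -phaseMn; apply: phase_dvd; rewrite d_eq PoszM; apply/dvdzP; exists a; ring.
have rho_eq1 : (rho == 1) = (K%:Z %| a)%Z.
  by rewrite /rho phase_eq1 d_eq PoszM mulrC (mulrC e%:Z) dvdz_mul2r // eqz_nat; lia.
have [K_dvd_a|K_ndvd_a] := boolP (K%:Z %| a)%Z.
  have /eqP -> : rho == 1 by rewrite rho_eq1.
  by rewrite (eq_bigr (fun _ => 1)) => [|k _]; rewrite ?expr1n // sumr_const card_ord mulr1.
rewrite mulr0; apply/eqP; move: (subrX1 rho K); rewrite rho_K subrr.
by move/esym/eqP; rewrite mulf_eq0 subr_eq0 rho_eq1 (negbTE K_ndvd_a).
Qed.

Lemma idx_lt (z : int) : (absz (z %% d)%Z < d)%N.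
Proof. lia. Qed.

Definition idx (z : int) : 'I_d := Ordinal (idx_lt z).

Lemma vatE (f : 'I_d -> algC) z : vat f z = f (idx z).
Proof. by rewrite /vat insubT /= => [|lt_z]; [exact: idx_lt | congr f; apply: val_inj]. Qed.

Lemma idx_mod z : (d%:Z %| (idx z)%:Z - z)%Z.
Proof.
rewrite /= -eqz_mod_dvd.
have -> : ((`|(z %% d)%Z|%N)%:Z) = (z %% d)%Z by lia.
by rewrite modz_mod.
Qed.

Lemma idx_small (a : nat) : (a < d)%N -> (idx a%:Z : nat) = a.
Proof. by move=> lt_a_d; rewrite /= modz_small // lez_nat ltz_nat lt_a_d. Qed.

Lemma vat_ord (f : 'I_d -> algC) (i : 'I_d) : vat f i%:Z = f i.
Proof. by rewrite vatE; congr f; apply: ord_inj; rewrite idx_small. Qed.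

Lemma ord_eq_dvd (i j : 'I_d) : (d%:Z %| i%:Z - j%:Z)%Z -> i = j.
Proof.
have lt_i := ltn_ord i; have lt_j := ltn_ord j.
rewrite (@dvdz_window d _ 0) //; [|lia|lia].
by move=> /eqP ij; apply: ord_inj; lia.
Qed.

Lemma vat_per (f : 'I_d -> algC) a b : (d%:Z %| a - b)%Z -> vat f a = vat f b.
Proof.
rewrite -eqz_mod_dvd => /eqP ab; rewrite !vatE; congr f; apply: val_inj => /=.
by rewrite ab.
Qed.

Lemma sum_translate (G : int -> algC) (c : int) :
  (forall a b, (d%:Z %| a - b)%Z -> G a = G b) ->
  \sum_(n < d) G n%:Z = \sum_(n < d) G (n%:Z + c).
Proof.
move=> G_per.
have inj : injective (fun n : 'I_d => idx (n%:Z + c)).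
  move=> i j /= ij; apply: ord_eq_dvd.
  have := rpredB (idx_mod (j%:Z + c)) (idx_mod (i%:Z + c)); rewrite ij.
  by rewrite (_ : _ - _ - _ = i%:Z - j%:Z) //; ring.
rewrite (reindex_inj inj) /=.
by apply: eq_bigr => n _; apply: G_per; exact: idx_mod.
Qed.

Lemma sum_indicator (F : 'I_d -> algC) (z : int) :
  \sum_(p < d) F p * ((d%:Z %| p%:Z - z)%Z)%:R = vat F z.
Proof.
rewrite (bigD1 (idx z)) //= idx_mod mulr1 big1 ?addr0 ?vatE //.
move=> p /negP p_neq; have [pz|] := boolP (d%:Z %| p%:Z - z)%Z; last by rewrite mulr0.
exfalso; apply: p_neq; apply/eqP/ord_eq_dvd.
have := rpredB pz (idx_mod z).
by rewrite (_ : _ - _ - _ = p%:Z - (idx z)%:Z) //; ring.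
Qed.

Lemma dft_at (f : 'I_d -> algC) z : vat (dftv f) z = \sum_(j < d) phase (z * j%:Z) * f j.
Proof.
rewrite vatE /dftv; apply: eq_bigr => j _; rewrite /Fmat mxE -phase_nat; congr (_ * _).
apply: phase_per; rewrite PoszM (_ : _ - _ = ((idx z)%:Z - z) * j%:Z); last by ring.
by apply: dvdz_mulr; exact: idx_mod.
Qed.

Lemma dftv_ord (f : 'I_d -> algC) (p : 'I_d) :
  dftv f p = \sum_(j < d) phase (p%:Z * j%:Z) * f j.
Proof. by rewrite -dft_at vat_ord. Qed.

Lemma inverse_dft (f : 'I_d -> algC) z :
  vat f z = d%:R^-1 * \sum_(p < d) phase (- (p%:Z * z)) * dftv f p.
Proof.
have -> : \sum_(p < d) phase (- (p%:Z * z)) * dftv f p =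
          \sum_(j < d) f j * \sum_(p < d) phase ((d %/ d * p)%N%:Z * (j%:Z - z)).
  under eq_bigr => p _ do rewrite dftv_ord mulr_sumr.
  rewrite exchange_big /=; apply: eq_bigr => j _; rewrite mulr_sumr; apply: eq_bigr => p _.
  rewrite divnn /= mul1n mulrA -phaseD mulrC; congr (_ * _); congr phase; ring.
under eq_bigr => j _ do rewrite phase_orthogonality // mulrCA.
by rewrite -mulr_sumr sum_indicator mulrA mulVf ?mul1r // pnatr_eq0.
Qed.

End DiscreteFourier.

Lemma exchange_big4 (R : nmodType) (I1 I2 J1 J2 : finType) (F : I1 -> I2 -> J1 -> J2 -> R) :
  \sum_i1 \sum_i2 \sum_j1 \sum_j2 F i1 i2 j1 j2 = \sum_j1 \sum_j2 \sum_i1 \sum_i2 F i1 i2 j1 j2.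
Proof.
under eq_bigr => i1 _ do rewrite exchange_big.
rewrite exchange_big; apply: eq_bigr => j1 _.
by under eq_bigr => i1 _ do rewrite exchange_big; rewrite exchange_big.
Qed.

Lemma mulr_sumr2 (R : pzSemiRingType) (I J : finType) (c : R) (F : I -> J -> R) :
  c * \sum_i \sum_j F i j = \sum_i \sum_j c * F i j.
Proof. by rewrite mulr_sumr; apply: eq_bigr => i _; rewrite mulr_sumr. Qed.

Section Spectrogram.
Variable d' : nat.
Local Notation d := d'.+1.
Local Notation phase := (phase d').
Local Notation idx := (idx d').

Definition stft (x m : 'I_d -> algC) (k l : nat) : algC :=
  \sum_(n < d) x n * vat m (n%:Z - l%:Z) * wroot d ^+ (n * k).

Definition stft_phase (k l : nat) (u : 'I_d * 'I_d) : int :=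
  (u.2%:Z + l%:Z) * (k%:Z - u.1%:Z).

Lemma stft_expand x m k l : stft x m k l =
  d%:R^-1 * \sum_(u : 'I_d * 'I_d) dftv x u.1 * m u.2 * phase (stft_phase k l u).
Proof.
pose G z := vat x z * vat m (z - l%:Z) * phase (z * k%:Z).
have -> : stft x m k l = \sum_(n < d) G n%:Z.
  by apply: eq_bigr => n _; rewrite /G vat_ord -phase_nat PoszM.
rewrite (sum_translate l%:Z) /G; last first.
  move=> a b ab; rewrite (vat_per x ab) (vat_per m (b := b - l%:Z)); last first.
    by rewrite (_ : _ - _ = a - b) //; ring.
  by congr (_ * _); apply: phase_per; rewrite -mulrBl; exact: dvdz_mulr.
rewrite /stft_phase -(pair_bigA _ (fun p n : 'I_d =>
  dftv x p * m n * phase ((n%:Z + l%:Z) * (k%:Z - p%:Z)))) /=.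
rewrite exchange_big mulr_sumr /=; apply: eq_bigr => n _.
rewrite (_ : n%:Z + l%:Z - l%:Z = n%:Z); last by ring.
rewrite vat_ord inverse_dft -!mulrA; congr (_ * _).
rewrite mulr_suml; apply: eq_bigr => p _.
rewrite (_ : phase ((n%:Z + l%:Z) * (k%:Z - p%:Z)) =
  phase (- (p%:Z * (n%:Z + l%:Z))) * phase ((n%:Z + l%:Z) * k%:Z)); first by ring.
by rewrite -phaseD; congr phase; ring.
Qed.

Lemma spectrogram_expand x m k l : `|stft x m k l| ^+ 2 = d%:R^-1 ^+ 2 *
  \sum_(u : 'I_d * 'I_d) \sum_(v : 'I_d * 'I_d)
     (dftv x u.1 * m u.2 * ((dftv x v.1)^* * (m v.2)^*)) *
     phase (stft_phase k l u - stft_phase k l v).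
Proof.
rewrite normCK stft_expand rmorphM rmorph_sum fmorphV rmorph_nat mulrACA -expr2.
congr (_ * _); rewrite mulr_suml; apply: eq_bigr => u _; rewrite mulr_sumr.
apply: eq_bigr => v _; rewrite !rmorphM /= phase_conj phaseD; ring.
Qed.

Lemma tildemx_entry (A : 'M[algC]_d) K L (al : 'I_L) (om : 'I_K) :
  (0 < K)%N -> (0 < L)%N -> (K %| d)%N -> (L %| d)%N ->
  tildemx K L A al om = \sum_(k < K) \sum_(l < L)
     phase ((d %/ L * (al * l))%N%:Z) * A (idx (k * (d %/ K))%N%:Z) (idx (l * (d %/ L))%N%:Z) *
     phase ((d %/ K * (om * k))%N%:Z).
Proof.
move=> K_gt0 L_gt0 K_dvd L_dvd; rewrite /tildemx mxE; apply: eq_bigr => k _.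
rewrite !mxE mulr_suml; apply: eq_bigr => l _.
by rewrite !mxE /mat_at !vatE !phase_nat !exprM !wroot_div.
Qed.

Lemma grid_sum (K L al om : nat) (u v : 'I_d * 'I_d) :
  (0 < K)%N -> (0 < L)%N -> (K %| d)%N -> (L %| d)%N ->
  \sum_(k < K) \sum_(l < L) phase ((d %/ L * (al * l))%N%:Z) *
     phase (stft_phase (k * (d %/ K)) (l * (d %/ L)) u
            - stft_phase (k * (d %/ K)) (l * (d %/ L)) v) *
     phase ((d %/ K * (om * k))%N%:Z)
  = (K%:R * ((K%:Z %| om%:Z + u.2%:Z - v.2%:Z)%Z)%:R) *
    ((L%:R * ((L%:Z %| al%:Z - u.1%:Z + v.1%:Z)%Z)%:R) *
     phase (- (u.1%:Z * u.2%:Z) + v.1%:Z * v.2%:Z)).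
Proof.
move=> K_gt0 L_gt0 K_dvd L_dvd.
rewrite -(phase_orthogonality _ K_gt0 K_dvd) -(phase_orthogonality _ L_gt0 L_dvd).
rewrite mulr_suml; apply: eq_bigr => k _; rewrite mulr_suml mulr_sumr.
by apply: eq_bigr => l _; rewrite -!phaseD; congr phase; rewrite /stft_phase !PoszM; ring.
Qed.

End Spectrogram.

Section SampledSpectrogram.
Variable d' : nat.
Local Notation d := d'.+1.
Local Notation phase := (phase d').
Local Notation idx := (idx d').

Lemma sample_lt K (k : 'I_K) : (K %| d)%N -> (k * (d %/ K) < d)%N.
Proof.
move=> K_dvd; have K_gt0 : (0 < K)%N by apply: dvdn_gt0 K_dvd.
rewrite -[X in (_ < X)%N](divnK K_dvd) [X in (_ < X)%N]mulnC ltn_pmul2r ?ltn_ord //.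
by rewrite divn_gt0 // dvdn_leq.
Qed.

Lemma tilde_spectrogram (x m : 'I_d -> algC) K L (al : 'I_L) (om : 'I_K) :
  (0 < K)%N -> (0 < L)%N -> (K %| d)%N -> (L %| d)%N ->
  tildemx K L (Ymat x m 0) al om = d%:R^-1 ^+ 2 *
  \sum_(u : 'I_d * 'I_d) \sum_(v : 'I_d * 'I_d)
     (dftv x u.1 * m u.2 * ((dftv x v.1)^* * (m v.2)^*)) *
     ((K%:R * ((K%:Z %| om%:Z + u.2%:Z - v.2%:Z)%Z)%:R) *
      ((L%:R * ((L%:Z %| al%:Z - u.1%:Z + v.1%:Z)%Z)%:R) *
       phase (- (u.1%:Z * u.2%:Z) + v.1%:Z * v.2%:Z))).
Proof.
move=> K_gt0 L_gt0 K_dvd L_dvd; rewrite tildemx_entry //.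
pose C (u v : 'I_d * 'I_d) := dftv x u.1 * m u.2 * ((dftv x v.1)^* * (m v.2)^*).
pose P (k l : nat) (u v : 'I_d * 'I_d) := phase ((d %/ L * (al * l))%N%:Z) *
  phase (stft_phase (k * (d %/ K)) (l * (d %/ L)) u
         - stft_phase (k * (d %/ K)) (l * (d %/ L)) v) * phase ((d %/ K * (om * k))%N%:Z).
transitivity (\sum_(k < K) \sum_(l < L) (d%:R^-1 ^+ 2 *
    \sum_(u : 'I_d * 'I_d) \sum_(v : 'I_d * 'I_d) C u v * P k l u v)).
  apply: eq_bigr => k _; apply: eq_bigr => l _.
  rewrite !mxE addr0 !idx_small ?sample_lt // -/(stft x m _ _) spectrogram_expand.
  rewrite (_ : forall a b c S : algC, a * (c * S) * b = c * (a * b * S)); last by move=> *; ring.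
  congr (_ * _); rewrite mulr_sumr2.
  by apply: eq_bigr => u _; apply: eq_bigr => v _; rewrite /C /P; ring.
rewrite -mulr_sumr2 exchange_big4; congr (_ * _).
apply: eq_bigr => u _; apply: eq_bigr => v _.
by rewrite -mulr_sumr2 grid_sum.
Qed.

End SampledSpectrogram.

Section CorrelationTransforms.
Variable d' : nat.
Local Notation d := d'.+1.
Local Notation phase := (phase d').

Lemma vat_conj (f : 'I_d -> algC) z : vat (conjv f) z = (vat f z)^*.
Proof. by rewrite !vatE. Qed.

Lemma dft_autocorrelation (xh : 'I_d -> algC) (s t : int) :
  vat (dftv (hadamard xh (shiftv s (conjv xh)))) t =
  \sum_(p < d) \sum_(p' < d)
    phase (t * p%:Z) * xh p * (xh p')^* * ((d%:Z %| p'%:Z - (p%:Z + s))%Z)%:R.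
Proof.
rewrite dft_at; apply: eq_bigr => p _.
rewrite /hadamard /shiftv -sum_indicator !mulr_sumr; apply: eq_bigr => p' _.
by rewrite /conjv; ring.
Qed.

Lemma dft_spectral_autocorrelation (m : 'I_d -> algC) (s t : int) :
  vat (dftv (hadamard (dftv m) (shiftv s (conjv (dftv m))))) t =
  d%:R * \sum_(j < d) \sum_(j' < d)
    m j * (m j')^* * phase (- (s * j'%:Z)) * ((d%:Z %| t + j%:Z - j'%:Z)%Z)%:R.
Proof.
pose G (q j j' : 'I_d) := m j * (m j')^* * phase (- (s * j'%:Z)) *
  phase ((d %/ d * q)%N%:Z * (t + j%:Z - j'%:Z)).
transitivity (\sum_(q < d) \sum_(j < d) \sum_(j' < d) G q j j').
  rewrite dft_at; apply: eq_bigr => q _.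
  rewrite /hadamard /shiftv vat_conj dft_at dftv_ord rmorph_sum mulr_suml mulr_sumr.
  apply: eq_bigr => j _; rewrite !mulr_sumr; apply: eq_bigr => j' _.
  rewrite rmorphM /= phase_conj /G divnn /= mul1n.
  have -> : phase (q%:Z * (t + j%:Z - j'%:Z)) =
    phase (t * q%:Z) * phase (q%:Z * j%:Z) * phase (- ((q%:Z + s) * j'%:Z)) * phase (s * j'%:Z).
    by rewrite -!phaseD; congr phase; ring.
  have phase_inv : phase (- (s * j'%:Z)) * phase (s * j'%:Z) = 1 by rewrite -phaseD addNr.
  by rewrite -[LHS]mulr1 -phase_inv; ring.
rewrite exchange_big mulr_sumr; apply: eq_bigr => j _.
rewrite exchange_big mulr_sumr; apply: eq_bigr => j' _.
by rewrite /G -mulr_sumr phase_orthogonality //; ring.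
Qed.

End CorrelationTransforms.

Lemma mul_double_sums (R : pzSemiRingType) (I J : finType) (A : I -> I -> R) (B : J -> J -> R) :
  (\sum_p \sum_p' A p p') * (\sum_j \sum_j' B j j') =
  \sum_(u : I * J) \sum_(v : I * J) A u.1 v.1 * B u.2 v.2.
Proof.
rewrite -(pair_bigA _ (fun p j => \sum_(v : I * J) A p v.1 * B j v.2)) mulr_suml.
apply: eq_bigr => p _; rewrite mulr_suml /=.
under [RHS]eq_bigr => j _ do rewrite -(pair_bigA _ (fun p' j' => A p p' * B j j')) /=.
by rewrite [RHS]exchange_big; apply: eq_bigr => p' _; rewrite mulr_sumr2.
Qed.

Section AliasingFree.
Variable d' : nat.
Local Notation d := d'.+1.
Local Notation phase := (phase d').

Lemma window_indicators (M : nat) (a s e : int) : (0 < M)%N -> (M <= d)%N ->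
  (M%:Z %| a - s)%Z -> - M%:Z < s + e < M%:Z ->
  (M%:Z %| a + e)%Z = (s + e == 0) /\ (d%:Z %| s + e)%Z = (s + e == 0).
Proof.
move=> M_gt0 M_le_d M_dvd /andP[lo hi]; split.
  by rewrite (dvdz_window M_gt0 M_dvd); [apply/eqP/eqP|..]; lia.
by rewrite (@dvdz_window d _ 0) ?dvdz0 //; lia.
Qed.

Lemma aliased_term (K L al om : nat) (sm t : int) (p j p' j' : 'I_d) (xp xp' mj mj' : algC) :
  (L%:Z %| al%:Z - p%:Z + p'%:Z)%Z = (sm + (p'%:Z - p%:Z) == 0) ->
  (d%:Z %| p'%:Z - (p%:Z + - sm))%Z = (sm + (p'%:Z - p%:Z) == 0) ->
  (K%:Z %| om%:Z + j%:Z - j'%:Z)%Z = (t + (j%:Z - j'%:Z) == 0) ->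
  (d%:Z %| t + j%:Z - j'%:Z)%Z = (t + (j%:Z - j'%:Z) == 0) ->
  xp * mj * (xp'^* * mj'^*) * ((K%:R * ((K%:Z %| om%:Z + j%:Z - j'%:Z)%Z)%:R) *
    ((L%:R * ((L%:Z %| al%:Z - p%:Z + p'%:Z)%Z)%:R) * phase (- (p%:Z * j%:Z) + p'%:Z * j'%:Z)))
  = (K * L)%:R * ((phase (t * p%:Z) * xp * xp'^* * ((d%:Z %| p'%:Z - (p%:Z + - sm))%Z)%:R) *
      (mj * mj'^* * phase (- (sm * j'%:Z)) * ((d%:Z %| t + j%:Z - j'%:Z)%Z)%:R)).
Proof.
move=> -> -> -> ->; case: eqP => [j_shift|]; last by rewrite !(mulr0, mul0r).
case: eqP => [p_shift|]; last by rewrite !(mulr0, mul0r).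
have -> : phase (- (p%:Z * j%:Z) + p'%:Z * j'%:Z) = phase (t * p%:Z) * phase (- (sm * j'%:Z)).
  have p'_eq : p'%:Z = p%:Z - sm by lia.
  have j'_eq : j'%:Z = j%:Z + t by lia.
  by rewrite -phaseD p'_eq j'_eq; congr phase; ring.
by rewrite natrM !mulr1; ring.
Qed.

Lemma supp_in_lt (f : 'I_d -> algC) g (n : 'I_d) : supp_in f g -> f n != 0 -> (n < g)%N.
Proof. by move=> f_supp; apply: contraR; rewrite -leqNgt => /f_supp ->. Qed.

Lemma aliasing_free_entry (x m : 'I_d -> algC) (K L gamma delta : nat)
    (al : 'I_L) (om : 'I_K) (sm t : int) :
  (K %| d)%N -> (L %| d)%N -> supp_in (dftv x) gamma -> supp_in m delta ->
  (L%:Z %| al%:Z - sm)%Z -> (K%:Z %| om%:Z - t)%Z ->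
  (forall p p' : nat, (p < gamma)%N -> (p' < gamma)%N -> - L%:Z < sm + (p'%:Z - p%:Z) < L%:Z) ->
  (forall j j' : nat, (j < delta)%N -> (j' < delta)%N -> - K%:Z < t + (j%:Z - j'%:Z) < K%:Z) ->
  tildemx K L (Ymat x m 0) al om =
   (K * L)%:R / (d%:R ^+ 3) * vat (dftv (hadamard (dftv x) (shiftv (- sm) (conjv (dftv x))))) t
      * vat (dftv (hadamard (dftv m) (shiftv sm (conjv (dftv m))))) t.
Proof.
move=> K_dvd L_dvd x_supp m_supp L_sm K_t x_win m_win.
have K_gt0 : (0 < K)%N by apply: dvdn_gt0 K_dvd.
have L_gt0 : (0 < L)%N by apply: dvdn_gt0 L_dvd.
have K_le : (K <= d)%N by apply: dvdn_leq.
have L_le : (L <= d)%N by apply: dvdn_leq.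
rewrite tilde_spectrogram // dft_autocorrelation dft_spectral_autocorrelation.
rewrite (_ : forall X M : algC, (K * L)%:R / d%:R ^+ 3 * X * (d%:R * M) =
  d%:R^-1 ^+ 2 * ((K * L)%:R * (X * M))); last first.
  by move=> X M; field; rewrite addrC natr1 pnatr_eq0.
congr (_ * _); rewrite mul_double_sums mulr_sumr2.
apply: eq_bigr => -[p j] _; apply: eq_bigr => -[p' j'] _ /=.
have [->|xp] := eqVneq (dftv x p) 0; first by rewrite !(mul0r, mulr0).
have [->|xp'] := eqVneq (dftv x p') 0; first by rewrite rmorph0 !(mul0r, mulr0).
have [->|mj] := eqVneq (m j) 0; first by rewrite !(mul0r, mulr0).
have [->|mj'] := eqVneq (m j') 0; first by rewrite rmorph0 !(mul0r, mulr0).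
have x_ind := window_indicators L_gt0 L_le L_sm
  (x_win _ _ (supp_in_lt x_supp xp) (supp_in_lt x_supp xp')).
have m_ind := window_indicators K_gt0 K_le K_t
  (m_win _ _ (supp_in_lt m_supp mj) (supp_in_lt m_supp mj')).
apply: aliased_term.
- by rewrite -(proj1 x_ind); congr (_ %| _)%Z; ring.
- by rewrite -(proj2 x_ind); congr (_ %| _)%Z; ring.
- by rewrite -(proj1 m_ind); congr (_ %| _)%Z; ring.
- by rewrite -(proj2 m_ind); congr (_ %| _)%Z; ring.
Qed.

End AliasingFree.

Lemma subsampleD d K L (A B : 'M[algC]_d) :
  subsample K L (A + B) = subsample K L A + subsample K L B.
Proof.
apply/matrixP => k l; rewrite !mxE /mat_at /vat.
case: insubP => [i _ _|_]; last by rewrite addr0.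
by case: insubP => [j _ _|_]; rewrite ?mxE ?addr0.
Qed.

Lemma tildemx_noise d K L (x m : 'I_d -> algC) (N : 'M[algC]_d) :
  tildemx K L (Ymat x m N) = tildemx K L (Ymat x m 0) + tildemx K L N.
Proof.
have -> : Ymat x m N = Ymat x m 0 + N by apply/matrixP => i j; rewrite !mxE addr0.
by rewrite /tildemx subsampleD linearD /= mulmxDr mulmxDl.
Qed.

Lemma tildemx_dim0 (A : 'M[algC]_0) K L : tildemx K L A = 0.
Proof.
rewrite /tildemx; have -> : subsample K L A = 0.
  by apply/matrixP => k l; rewrite !mxE /mat_at /vat insubF.
by rewrite trmx0 mulmx0 mul0mx.
Qed.

Unset Implicit Arguments.
Theorem mainTheorem5 (d : nat) (x m : 'I_d -> algC) (N : 'M[algC]_d)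
  (gamma delta K L kappa xi : nat)
  (hx : supp_in (dftv x) gamma) (hm : supp_in m delta)
  (hN : forall k l, N k l \is Num.real)
  (hK : (K %| d)%N) (hL : (L %| d)%N)
  (hKk : K = (delta - 1 + kappa)%N) (hk1 : (2 <= kappa)%N) (hk2 : (kappa <= delta)%N)
  (hLx : L = (gamma - 1 + xi)%N) (hx1 : (1 <= xi)%N) (hx2 : (xi <= gamma)%N) :
  let xh := dftv x in
  let mh := dftv m in
  let Yt := tildemx K L (Ymat x m N) in
  let Nt := tildemx K L N in
  let c : algC := (K * L)%:R / (d%:R ^+ 3) in
  forall (alpha : 'I_L) (omega : 'I_K),
  [/\ ((alpha <= xi - 1)%N -> (omega <= kappa - 1)%N ->
        Yt alpha omega =
          c * vat (dftv (hadamard xh (shiftv (- alpha%:Z) (conjv xh)))) omega%:Z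
            * vat (dftv (hadamard mh (shiftv alpha%:Z (conjv mh)))) omega%:Z
          + Nt alpha omega),
      ((alpha <= xi - 1)%N -> (delta <= omega <= K - 1)%N ->
        Yt alpha omega =
          c * vat (dftv (hadamard xh (shiftv (- alpha%:Z) (conjv xh)))) (omega%:Z - K%:Z)
            * vat (dftv (hadamard mh (shiftv alpha%:Z (conjv mh)))) (omega%:Z - K%:Z)
          + Nt alpha omega),
      ((gamma <= alpha <= L - 1)%N -> (omega <= kappa - 1)%N ->
        Yt alpha omega =
          c * vat (dftv (hadamard xh (shiftv (L%:Z - alpha%:Z) (conjv xh)))) omega%:Z
            * vat (dftv (hadamard mh (shiftv (alpha%:Z - L%:Z) (conjv mh)))) omega%:Z
          + Nt alpha omega)
    & ((gamma <= alpha <= L - 1)%N -> (delta <= omega <= K - 1)%N ->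
        Yt alpha omega =
          c * vat (dftv (hadamard xh (shiftv (L%:Z - alpha%:Z) (conjv xh)))) (omega%:Z - K%:Z)
            * vat (dftv (hadamard mh (shiftv (alpha%:Z - L%:Z) (conjv mh)))) (omega%:Z - K%:Z)
          + Nt alpha omega)].
Proof.
move=> xh mh Yt Nt c alpha omega; rewrite /Yt /Nt /c /xh /mh {Yt Nt c xh mh}.
case: d x m N hx hm hN hK hL alpha omega => [|d'] x m N hx hm _ hK hL alpha omega.
  by rewrite !tildemx_dim0 !mxE expr0n /= invr0 !mulr0 !mul0r addr0.
have lt_alpha := ltn_ord alpha; have lt_omega := ltn_ord omega.
(* Split off the noise; cases (i)-(ii) use the shift sm = alpha, cases
   (iii)-(iv) sm = alpha - L, and t is omega or omega - K.  The windows of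
   aliasing_free_entry follow from K = delta - 1 + kappa, L = gamma - 1 + xi. *)
rewrite tildemx_noise mxE -(opprB alpha%:Z L%:Z).
split=> [a_lo o_lo | a_lo o_hi | a_hi o_lo | a_hi o_hi]; congr (_ + _);
  apply: (aliasing_free_entry hK hL hx hm);
  rewrite ?subrr ?opprB ?subrKC ?dvdz0 ?dvdzz // => *; lia.
Qed.
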